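(* Let $\mathcal{M}_1=(\Sigma,\Gamma,\mathcal{H}_1,U^{(1)},M^{(1)})$ and $\mathcal{M}_2=(\Sigma,\Gamma,\mathcal{H}_2,U^{(2)},M^{(2)})$ be QMMs with initial density operators $\rho_1,\rho_2$, let $k$ be a positive integer, $n_1=\dim\mathcal{H}_1$, $n_2=\dim\mathcal{H}_2$ and $n=n_1^2+n_2^2$. Then $(\mathcal{M}_1,\rho_1)\sim_k(\mathcal{M}_2,\rho_2)$ if and only if there exist complex $n\times n$ matrices $F^{(0)},\dots,F^{(k)}$, $A^{(0)}_\sigma,\dots,A^{(k)}_\sigma$ for each $\sigma\in\Sigma$, and $A^{(0)}_\gamma,\dots,A^{(k-1)}_\gamma$ for each $\gamma\in\Gamma$, such that: (1) the first column of $F^{(0)}$ is $\begin{bmatrix}\vec\rho_1\\ \vec\rho_2\end{bmatrix}$; (2) $\eta^\dagger F^{(l)}=0$ for $0\le l\le k$, where $\eta=\begin{bmatrix}\eta_{n_1}\\ -\eta_{n_2}\end{bmatrix}$; (3) for every $\sigma\in\Sigma$ and $0\le l\le k$: $\begin{bmatrix}\hat U^{(1)}_\sigma&0\\0&\hat U^{(2)}_\sigma\end{bmatrix}F^{(l)}=F^{(l)}A^{(l)}_\sigma$; (4) for every $\gamma\in\Gamma$ and $0\le l<k$: $\begin{bmatrix}\hat M^{(1)}_\gamma&0\\0&\hat M^{(2)}_\gamma\end{bmatrix}F^{(l)}=F^{(l+1)}A^{(l)}_\gamma$.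
   Context: A quantum Mealy machine (QMM) is a tuple $\mathcal{M}=(\Sigma,\Gamma,\mathcal{H},U,M)$ where $\Sigma,\Gamma$ are finite alphabets, $\mathcal{H}$ a finite-dimensional complex Hilbert space, $U=\{U_\sigma\}_{\sigma\in\Sigma}$ unitary operators on $\mathcal{H}$, $M=\{M_\gamma\}_{\gamma\in\Gamma}$ linear operators with $\sum_\gamma M_\gamma^\dagger M_\gamma=I$. For a word $a$, $|a|$ is its length, $a[l:r]=a[l]\cdots a[r]$ (empty if $l>r$), $U_a=U_{a[|a|]}\cdots U_{a[1]}$, $U_\epsilon=I$. A scheduler for $a\in\Sigma^*$ is a finite non-decreasing integer sequence $\mathcal{S}=(s_1\le\dots\le s_{|\mathcal{S}|})$ in $\{0,\dots,|a|\}$ (possibly empty). With $s_0=0$, $s_{|\mathcal{S}|+1}=|a|$, $a_i=a[s_{i-1}+1:s_i]$. For $b\in\Gamma^{|\mathcal{S}|}$, $V_{b|a,\mathcal{S}}=U_{a_{|\mathcal{S}|+1}}M_{b_{|\mathcal{S}|}}U_{a_{|\mathcal{S}|}}\cdots M_{b_1}U_{a_1}$ and $\Pr^{\mathcal{M}}_\rho(b|a,\mathcal{S})=\operatorname{tr}(V_{b|a,\mathcal{S}}\rho V_{b|a,\mathcal{S}}^\dagger)$. $(\mathcal{M}_1,\rho_1)\sim_k(\mathcal{M}_2,\rho_2)$ means $\Pr^{\mathcal{M}_1}_{\rho_1}(b|a,\mathcal{S})=\Pr^{\mathcal{M}_2}_{\rho_2}(b|a,\mathcal{S})$ for all $a\in\Sigma^*$,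 schedulers $\mathcal{S}$ for $a$ with $|\mathcal{S}|\le k$, and $b\in\Gamma^{|\mathcal{S}|}$. For a $d\times d$ matrix $\rho$, its vectorization $\vec\rho\in\mathbb{C}^{d^2}$ has entries $\vec\rho_{(i-1)d+j}=\rho_{ij}$; for a $d\times d$ matrix $A$, $\hat A$ is the $d^2\times d^2$ matrix with $\hat A_{(i-1)d+j,(x-1)d+y}=A_{ix}\overline{A_{jy}}$ (so $\overrightarrow{A\rho A^\dagger}=\hat A\vec\rho$); $\eta_d\in\mathbb{C}^{d^2}$ is the vectorization of the trace, $(\eta_d)_{(i-1)d+j}=\delta_{ij}$ (so $\operatorname{tr}\rho=\eta_d^\dagger\vec\rho$). *)

(* The complex field is abstracted as an arbitrary
   numClosedFieldType C (algebraically closed field with conjugation and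
   order/norm, e.g. algC or the complex numbers). *)
From HB Require Import structures.
From mathcomp Require Import all_boot all_order all_algebra.
Set Implicit Arguments. Unset Strict Implicit. Unset Printing Implicit Defensive.
Import Order.TTheory GRing.Theory Num.Theory.
Local Open Scope ring_scope.

Section QMM.
Variable C : numClosedFieldType.

Definition adjmx m n (A : 'M[C]_(m, n)) : 'M[C]_(n, m) := (map_mx Num.conj A)^T.

Definition density d (rho : 'M[C]_d) : Prop :=
  (forall v : 'cV[C]_d, 0 <= (adjmx v *m rho *m v) 0 0) /\ \tr rho = 1.

Definition unitary d (U : 'M[C]_d) : Prop :=
  adjmx U *m U = 1%:M /\ U *m adjmx U = 1%:M.

Definition measurement (Gamma : finType) d (M : Gamma -> 'M[C]_d) : Prop :=
  \sum_(g : Gamma) adjmx (M g) *m M g = 1%:M.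

(* U_a = U_{a[|a|]} ... U_{a[1]} *)
Definition Uword (Sigma : finType) d (U : Sigma -> 'M[C]_d) (a : seq Sigma) : 'M[C]_d :=
  foldl (fun acc s => U s *m acc) 1%:M a.

(* a[l+1 : r] (1-indexed), i.e. the letters at 0-indexed positions l .. r-1 *)
Definition segment (T : Type) (a : seq T) (l r : nat) : seq T :=
  take (r - l) (drop l a).

Fixpoint Vrec (Sigma Gamma : finType) d (U : Sigma -> 'M[C]_d) (M : Gamma -> 'M[C]_d)
  (a : seq Sigma) (p : nat) (sb : seq (nat * Gamma)) : 'M[C]_d :=
  match sb with
  | [::] => Uword U (segment a p (size a))
  | (s, g) :: rest => Vrec U M a s rest *m M g *m Uword U (segment a p s)
  end.

Definition Vmx (Sigma Gamma : finType) d (U : Sigma -> 'M[C]_d) (M : Gamma -> 'M[C]_d)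
  (a : seq Sigma) (S : seq nat) (b : seq Gamma) : 'M[C]_d :=
  Vrec U M a 0 (zip S b).

Definition Pr (Sigma Gamma : finType) d (U : Sigma -> 'M[C]_d) (M : Gamma -> 'M[C]_d)
  (rho : 'M[C]_d) (a : seq Sigma) (S : seq nat) (b : seq Gamma) : C :=
  let V := Vmx U M a S b in \tr (V *m rho *m adjmx V).

Definition scheduler (T : Type) (a : seq T) (S : seq nat) : bool :=
  sorted leq S && all (fun s => s <= size a)%N S.

Definition kequiv (Sigma Gamma : finType) d1 d2
  (U1 : Sigma -> 'M[C]_d1) (M1 : Gamma -> 'M[C]_d1) (rho1 : 'M[C]_d1)
  (U2 : Sigma -> 'M[C]_d2) (M2 : Gamma -> 'M[C]_d2) (rho2 : 'M[C]_d2) (k : nat) : Prop :=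
  forall (a : seq Sigma) (S : seq nat), scheduler a S -> (size S <= k)%N ->
  forall b : (size S).-tuple Gamma,
    Pr U1 M1 rho1 a S b = Pr U2 M2 rho2 a S b.

(* index splitting for vectorization: 0-indexed k = i*d + j *)
Lemma vec_pos d (k : 'I_(d * d)) : (0 < d)%N.
Proof. by case: d k => [[]|]. Qed.
Lemma vec_div_lt d (k : 'I_(d * d)) : (k %/ d < d)%N.
Proof. by rewrite ltn_divLR ?vec_pos. Qed.
Lemma vec_mod_lt d (k : 'I_(d * d)) : (k %% d < d)%N.
Proof. by rewrite ltn_pmod ?vec_pos. Qed.
Definition vrow d (k : 'I_(d * d)) : 'I_d := Ordinal (vec_div_lt k).
Definition vcol d (k : 'I_(d * d)) : 'I_d := Ordinal (vec_mod_lt k).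

Definition vecmx d (rho : 'M[C]_d) : 'cV[C]_(d * d) :=
  \col_(k < d * d) rho (vrow k) (vcol k).

Definition hatmx d (A : 'M[C]_d) : 'M[C]_(d * d) :=
  \matrix_(p < d * d, q < d * d) (A (vrow p) (vrow q) * Num.conj (A (vcol p) (vcol q))).

(* eta_d = vectorization of the identity (trace functional) *)
Definition etavec d : 'cV[C]_(d * d) :=
  \col_(k < d * d) (if vrow k == vcol k then 1 else 0).

End QMM.

(* Let HU s and HM g be the block-diagonal actions of the letters and outcomes
   on pairs of vectorised operators, r0 = [vec rho1; vec rho2], and eta' the
   row vector with eta' [vec X; vec Y] = tr X - tr Y.  Running a word under a
   schedule with l measurements sends r0 to a vector reachable from r0 by the
   HU's and exactly l of the HM's, and every such vector arises this way; the
   two outcome probabilities are the two traces.  So ~_k holds iff eta' kills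
   the span V_l of the vectors reachable with l <= k measurements.  The V_l are
   HU-invariant and HM maps V_l into V_(l+1), so any F^(l) with column space
   V_l satisfies (2)-(4); since eta' <> 0 kills V_0, V_0 is a proper subspace
   and F^(0) can be chosen with first column r0.  Conversely, (1), (3), (4)
   put every reachable vector in the column space of some F^(l), which (2)
   makes orthogonal to eta'. *)

From HB Require Import structures.
From mathcomp Require Import all_boot all_order all_algebra.
From mathcomp Require Import ring zify.
From Stdlib Require Import Classical ClassicalEpsilon.
Set Implicit Arguments. Unset Strict Implicit. Unset Printing Implicit Defensive.
Import Order.TTheory GRing.Theory Num.Theory.
Local Open Scope ring_scope.

Section Vectorization.
Variable C : numClosedFieldType.

Lemma adjmxE m n (A : 'M[C]_(m, n)) i j : adjmx A i j = (A j i)^*.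
Proof. by rewrite /adjmx !mxE. Qed.

Lemma adjmxM m n p (A : 'M[C]_(m, n)) (B : 'M[C]_(n, p)) :
  adjmx (A *m B) = adjmx B *m adjmx A.
Proof. by rewrite /adjmx map_mxM trmx_mul. Qed.

Lemma adjmx1 d : adjmx (1%:M : 'M[C]_d) = 1%:M.
Proof. by rewrite /adjmx map_mx1 trmx1. Qed.

Lemma adjmxN m n (A : 'M[C]_(m, n)) : adjmx (- A) = - adjmx A.
Proof. by rewrite /adjmx map_mxN linearN. Qed.

Lemma adjmxK m n (A : 'M[C]_(m, n)) : adjmx (adjmx A) = A.
Proof. by apply/matrixP => i j; rewrite !adjmxE conjCK. Qed.

Lemma adjmx_eq0 m n (A : 'M[C]_(m, n)) : (adjmx A == 0) = (A == 0).
Proof.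
apply/eqP/eqP => [A0|->]; last by apply/matrixP => i j; rewrite adjmxE !mxE rmorph0.
by rewrite -[A]adjmxK A0; apply/matrixP => i j; rewrite adjmxE !mxE rmorph0.
Qed.

Lemma adjmx_col m1 m2 n (A : 'M[C]_(m1, n)) (B : 'M[C]_(m2, n)) :
  adjmx (col_mx A B) = row_mx (adjmx A) (adjmx B).
Proof. by rewrite /adjmx map_col_mx tr_col_mx. Qed.

Definition sandwich d (A X : 'M[C]_d) := A *m X *m adjmx A.

Lemma sandwichM d (A B X : 'M[C]_d) :
  sandwich (A *m B) X = sandwich A (sandwich B X).
Proof. by rewrite /sandwich adjmxM !mulmxA. Qed.

Lemma sandwich1 d (X : 'M[C]_d) : sandwich 1%:M X = X.
Proof. by rewrite /sandwich adjmx1 mul1mx mulmx1. Qed.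

Lemma vidx_subproof d (i j : 'I_d) : (i * d + j < d * d)%N.
Proof.
apply: (@leq_trans (i * d + d)); first by rewrite ltn_add2l.
by rewrite -mulSnr leq_mul2r ltn_ord orbT.
Qed.

Definition vidx d (i j : 'I_d) : 'I_(d * d) := Ordinal (vidx_subproof i j).

Lemma vrow_vidx d (i j : 'I_d) : vrow (vidx i j) = i.
Proof.
apply: val_inj => /=; rewrite divnMDl ?(leq_ltn_trans _ (ltn_ord j)) //.
by rewrite divn_small // addn0.
Qed.

Lemma vcol_vidx d (i j : 'I_d) : vcol (vidx i j) = j.
Proof. by apply: val_inj => /=; rewrite modnMDl modn_small. Qed.

Lemma vidx_vrow d (k : 'I_(d * d)) : vidx (vrow k) (vcol k) = k.
Proof. by apply: val_inj => /=; rewrite -divn_eq. Qed.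

Lemma big_vidx d (f : 'I_(d * d) -> C) :
  \sum_(k < d * d) f k = \sum_(i < d) \sum_(j < d) f (vidx i j).
Proof.
rewrite pair_big (reindex (fun p : 'I_d * 'I_d => vidx p.1 p.2)) //=.
exists (fun k => (vrow k, vcol k)) => [[i j] _|k _] /=.
  by rewrite vrow_vidx vcol_vidx.
by rewrite vidx_vrow.
Qed.

Lemma vecmx_sandwich d (A X : 'M[C]_d) :
  vecmx (sandwich A X) = hatmx A *m vecmx X.
Proof.
apply/colP => p; rewrite !mxE big_vidx.
under [RHS]eq_bigr do under eq_bigr do rewrite !mxE vrow_vidx vcol_vidx.
transitivity (\sum_y \sum_x A (vrow p) x * X x y * (A (vcol p) y)^*).
  by apply: eq_bigr => y _; rewrite adjmxE mxE big_distrl.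
by rewrite exchange_big; apply: eq_bigr => x _; apply: eq_bigr => y _ /=; ring.
Qed.

Lemma etavec_vecmx d (X : 'M[C]_d) : adjmx (etavec C d) *m vecmx X = (\tr X)%:M.
Proof.
apply/rowP => k; rewrite ord1 !mxE eqxx mulr1n big_vidx; apply: eq_bigr => i _.
rewrite (bigD1 i) //= big1 ?addr0 => [|j ji].
  by rewrite adjmxE !mxE vrow_vidx vcol_vidx eqxx rmorph1 mul1r.
by rewrite adjmxE !mxE vrow_vidx vcol_vidx eq_sym (negbTE ji) rmorph0 mul0r.
Qed.

Lemma trace_eq1_dim_gt0 d (X : 'M[C]_d) : \tr X = 1 -> (0 < d)%N.
Proof.
by case: d X => // X; rewrite /mxtrace big_ord0 => /eqP; rewrite eq_sym oner_eq0.
Qed.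

Lemma etavec_neq0 d : (0 < d)%N -> etavec C d != 0.
Proof.
case: d => // d _; apply/eqP => /colP/(_ (vidx ord0 ord0)).
by rewrite !mxE vrow_vidx vcol_vidx eqxx => /eqP; rewrite oner_eq0.
Qed.

Lemma block_hatmx_vecmx n1 n2 (A X : 'M[C]_n1) (B Y : 'M[C]_n2) :
  block_mx (hatmx A) 0 0 (hatmx B) *m col_mx (vecmx X) (vecmx Y) =
  col_mx (vecmx (sandwich A X)) (vecmx (sandwich B Y)).
Proof. by rewrite mul_block_col !mul0mx addr0 add0r !vecmx_sandwich. Qed.

Lemma etavec_vecmx_col n1 n2 (X : 'M[C]_n1) (Y : 'M[C]_n2) :
  adjmx (col_mx (etavec C n1) (- etavec C n2)) *m col_mx (vecmx X) (vecmx Y) =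
  (\tr X - \tr Y)%:M.
Proof.
by rewrite adjmx_col adjmxN mul_row_col mulNmx !etavec_vecmx raddfB.
Qed.

End Vectorization.

Section Colspace.
Variable K : fieldType.

Definition in_colspace m n (F : 'M[K]_(m, n)) (v : 'cV[K]_m) := exists x, v = F *m x.

Lemma in_colspaceP m n (F : 'M[K]_(m, n)) v :
  in_colspace F v <-> (v^T <= F^T)%MS.
Proof.
split=> [[x ->]|/submxP [D e]]; first by rewrite trmx_mul submxMl.
by exists D^T; rewrite -[v]trmxK e trmx_mul trmxK.
Qed.

Lemma mulmx_colspace_eq0 p m n (w : 'M[K]_(p, m)) (F : 'M[K]_(m, n)) :
  (forall v, in_colspace F v -> w *m v = 0) -> w *m F = 0.
Proof.
move=> wF0; apply/matrixP => i j.
have := congr1 (fun A : 'M_(p, 1) => A i 0) (wF0 _ (ex_intro _ (delta_mx j 0) erefl)).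
by rewrite mulmxA -colE !mxE.
Qed.

Lemma mulmx_colspace_factor m n p (H : 'M[K]_m) (F : 'M[K]_(m, n)) (G : 'M[K]_(m, p)) :
  (forall v, in_colspace F v -> in_colspace G (H *m v)) -> exists A, H *m F = G *m A.
Proof.
move=> HFG; suff /submxP [D e] : ((H *m F)^T <= G^T)%MS.
  by exists D^T; rewrite -[H *m F]trmxK e trmx_mul trmxK.
apply/row_subP => i; rewrite -tr_col colE -mulmxA; apply/in_colspaceP.
by apply: HFG; exists (delta_mx i 0).
Qed.

Lemma colspace_first_col n (F : 'M[K]_n) (r : 'cV[K]_n) :
  (\rank F < n)%N -> in_colspace F r ->
  exists F' : 'M[K]_n, (forall v, in_colspace F' v <-> in_colspace F v) /\
                       (forall j : 'I_n, val j = 0%N -> col j F' = r).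
Proof.
case: n F r => // n F r; rewrite -mxrank_tr; set B := F^T => rkB /in_colspaceP rB.
set X : 'M_(n, n.+1) := pid_mx (\rank B) *m row_ebase B.
have BX : (B <= X)%MS.
  rewrite -{1}(mulmx_ebase B) -(@pid_mx_id _ n.+1 n n.+1 _ rkB) -!mulmxA mulmxA.
  exact: submxMl.
have XB : (X <= B)%MS.
  have -> : X = pid_mx (\rank B) *m invmx (col_ebase B) *m B.
    rewrite -{3}(mulmx_ebase B) !mulmxA -(mulmxA _ (invmx _)) mulVmx ?col_ebase_unit //.
    by rewrite mulmx1 pid_mx_id ?rank_leq_col.
  exact: submxMl.
have eqB : (col_mx r^T X :=: B)%MS.
  apply/eqmxP; rewrite col_mx_sub rB XB /= -addsmxE.
  exact: submx_trans BX (addsmxSr _ _).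
exists (col_mx r^T X)^T; split=> [v|j j0].
  by rewrite !in_colspaceP trmxK eqB.
have -> : j = @lshift 1 n ord0 by apply: val_inj.
apply/colP => i; rewrite tr_col_mx trmxK !mxE.
by case: splitP => k; rewrite ?(ord1 k).
Qed.

End Colspace.

Section Span.
Variables (K : fieldType) (n : nat).
Implicit Types (P Q : 'cV[K]_n -> Prop) (u v : 'cV[K]_n).

(* The linear span of [P], described as the vectors killed by every linear
   form that kills [P]; in finite dimension this is the span itself. *)
Definition in_span P v :=
  forall w : 'rV[K]_n, (forall u, P u -> w *m u = 0) -> w *m v = 0.

Lemma in_span_id P v : P v -> in_span P v.
Proof. by move=> Pv w; apply. Qed.

Lemma in_spanD P u v : in_span P u -> in_span P v -> in_span P (u + v).
Proof. by move=> Pu Pv w wP; rewrite mulmxDr Pu ?Pv ?addr0. Qed.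

Lemma in_spanZ P v (c : 'M[K]_1) : P v -> in_span P (v *m c).
Proof. by move=> Pv w wP; rewrite mulmxA wP ?mul0mx. Qed.

Lemma in_span_mulmx P Q (H : 'M[K]_n) v :
  (forall u, P u -> Q (H *m u)) -> in_span P v -> in_span Q (H *m v).
Proof.
move=> PQ Pv w wQ; rewrite mulmxA; apply: Pv => u Pu.
by rewrite -mulmxA; apply/wQ/PQ.
Qed.

Lemma span_rows P : exists B : 'M[K]_n,
  (forall v, P v -> (v^T <= B)%MS) /\ (forall u : 'rV_n, (u <= B)%MS -> in_span P u^T).
Proof.
pose spanning (B : 'M[K]_n) := forall u : 'rV_n, (u <= B)%MS -> in_span P u^T.
suff: forall m B, (n - \rank B < m)%N -> spanning B ->
    exists B', (forall v, P v -> (v^T <= B')%MS) /\ spanning B'.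
  move/(_ n.+1 0); apply=> [|u]; first by rewrite ltnS leq_subr.
  by rewrite submx0 => /eqP ->; rewrite trmx0 => w _; rewrite mulmx0.
have grow B v : spanning B -> P v -> ~ (v^T <= B)%MS ->
    (\rank B < \rank (B + v^T))%N /\ spanning (B + v^T)%MS.
  move=> spanB Pv nvB; split.
    by apply: rank_ltmx; rewrite ltmxE addsmxSl addsmx_sub submx_refl; apply/negP.
  move=> u /sub_addsmxP [[D1 D2] /= ->]; rewrite linearD /=.
  apply: in_spanD; first by apply: spanB; apply: submxMl.
  by rewrite trmx_mul trmxK; apply: in_spanZ.
elim=> // m IH B rkB spanB.
case: (classic (forall v, P v -> (v^T <= B)%MS)) => [allP|]; first by exists B.
move=> /not_all_ex_not [v /(imply_to_and (P v))] [Pv nvB].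
have [rk_lt spanBv] := grow B v spanB Pv nvB.
have rk_le := rank_leq_col (B + v^T)%MS.
by apply: (IH (B + v^T)%MS) => //; lia.
Qed.

Lemma span_colspace P : exists F : 'M[K]_n, forall v, in_colspace F v <-> in_span P v.
Proof.
have [B [PB spanB]] := span_rows P.
exists B^T => v; rewrite in_colspaceP trmxK; split=> [vB|Pv].
  by rewrite -[v]trmxK; apply: spanB.
have cokerBv : (cokermx B)^T *m v = 0.
  apply/row_matrixP => j; rewrite row_mul row0 -tr_col; apply: Pv => u /PB/submxP [D uB].
  rewrite -[_ *m u]trmxK trmx_mul trmxK uB colE -mulmxA (mulmxA B) mulmx_coker.
  by rewrite mul0mx mulmx0 trmx0.
by rewrite submxE -[_ *m _]trmxK trmx_mul trmxK cokerBv trmx0.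
Qed.

End Span.

Section Reachability.
Variables (K : fieldType) (Sigma Gamma : finType) (N : nat).
Variables (HU : Sigma -> 'M[K]_N) (HM : Gamma -> 'M[K]_N).
Variables (r0 : 'cV[K]_N) (eta : 'rV[K]_N).

Inductive reachable : nat -> 'cV[K]_N -> Prop :=
| reachable0 : reachable 0 r0
| reachableU l v s : reachable l v -> reachable l (HU s *m v)
| reachableM l v g : reachable l v -> reachable l.+1 (HM g *m v).

Definition reachable_annihilated k :=
  forall l v, reachable l v -> (l <= k)%N -> eta *m v = 0.

Definition invariant_certificate k (F : nat -> 'M[K]_N)
    (AS : nat -> Sigma -> 'M[K]_N) (AG : nat -> Gamma -> 'M[K]_N) :=
  [/\ forall j : 'I_N, val j = 0%N -> col j (F 0%N) = r0,
      forall l, (l <= k)%N -> eta *m F l = 0,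
      forall s l, (l <= k)%N -> HU s *m F l = F l *m AS l s &
      forall g l, (l < k)%N -> HM g *m F l = F l.+1 *m AG l g].

Lemma certificate_annihilated k F AS AG :
  (0 < N)%N -> invariant_certificate k F AS AG -> reachable_annihilated k.
Proof.
move=> N_gt0 [F0 etaF HUF HMF].
suff reachF l v : reachable l v -> (l <= k)%N -> in_colspace (F l) v.
  by move=> l v Rv lk; have [x ->] := reachF l v Rv lk; rewrite mulmxA etaF ?mul0mx.
elim=> [|{}l {}v s _ IH|{}l {}v g _ IH] lk.
- by exists (delta_mx (Ordinal N_gt0) 0); rewrite -colE F0.
- by have [x ->] := IH lk; exists (AS l s *m x); rewrite !mulmxA HUF.
- by have [x ->] := IH (ltnW lk); exists (AG l g *m x); rewrite !mulmxA HMF.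
Qed.

Lemma annihilated_certificate k : eta != 0 -> reachable_annihilated k ->
  exists F AS AG, invariant_certificate k F AS AG.
Proof.
move=> eta_neq0 etaR.
have [Fs Fs_span] := choice _ (fun l => span_colspace (reachable l)).
have etaFs l : (l <= k)%N -> eta *m Fs l = 0.
  move=> lk; apply: mulmx_colspace_eq0 => v /Fs_span Rv.
  by apply: Rv => u Ru; apply: etaR Ru lk.
(* The nonzero row [eta] kills the column space of [Fs 0], leaving room for
   [r0] as its first column. *)
have rkFs0 : (\rank (Fs 0%N) < N)%N.
  rewrite ltnNge row_leq_rank; apply: contra eta_neq0 => free.
  by rewrite -(mulmx_free_eq0 _ free) etaFs.
have [F0 [F0_span F0r0]] : exists F0 : 'M[K]_N,
    (forall v, in_colspace F0 v <-> in_colspace (Fs 0%N) v) /\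
    (forall j : 'I_N, val j = 0%N -> col j F0 = r0).
  by apply: colspace_first_col rkFs0 _; apply/Fs_span/in_span_id/reachable0.
pose F l := if l is 0 then F0 else Fs l.
have F_span l v : in_colspace (F l) v <-> in_span (reachable l) v.
  by case: l => [|l] /=; [rewrite F0_span|]; apply: Fs_span.
have [AS HUF] : exists AS : nat * Sigma -> 'M[K]_N,
    forall ls, HU ls.2 *m F ls.1 = F ls.1 *m AS ls.
  apply: (choice (fun ls A => HU ls.2 *m F ls.1 = F ls.1 *m A)) => -[l s].
  apply: mulmx_colspace_factor => v /F_span Rv.
  by apply/F_span; apply: in_span_mulmx Rv => u; apply: reachableU.
have [AG HMF] : exists AG : nat * Gamma -> 'M[K]_N,
    forall lg, HM lg.2 *m F lg.1 = F lg.1.+1 *m AG lg.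
  apply: (choice (fun lg A => HM lg.2 *m F lg.1 = F lg.1.+1 *m A)) => -[l g].
  apply: mulmx_colspace_factor => v /F_span Rv.
  by apply/F_span; apply: in_span_mulmx Rv => u; apply: reachableM.
exists F, (fun l s => AS (l, s)), (fun l g => AG (l, g)).
split=> // [l lk|s l _|g l _]; [|exact: (HUF (l, s))|exact: (HMF (l, g))].
apply: mulmx_colspace_eq0 => v /F_span Rv.
by apply: Rv => u Ru; apply: etaR Ru lk.
Qed.

End Reachability.

Section Schedules.
Variables (C : numClosedFieldType) (Sigma Gamma : finType) (d : nat).
Variables (U : Sigma -> 'M[C]_d) (M : Gamma -> 'M[C]_d).

Lemma Uword_rcons w s : Uword U (rcons w s) = U s *m Uword U w.
Proof. by rewrite /Uword foldl_rcons. Qed.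

Lemma Vrec_rcons_measure a p sb g :
  Vrec U M a p (rcons sb (size a, g)) = M g *m Vrec U M a p sb.
Proof.
elim: sb p => [|[s g'] sb IH] p /=; last by rewrite IH !mulmxA.
by rewrite /segment subnn take0 /Uword /= mul1mx.
Qed.

Lemma Vrec_rcons_letter a s p sb :
  (p <= size a)%N -> all (fun x => x.1 <= size a)%N sb ->
  Vrec U M (rcons a s) p sb = U s *m Vrec U M a p sb.
Proof.
elim: sb p => [|[q g] sb IH] p pa /=.
  move=> _; rewrite /segment size_rcons drop_rcons // -Uword_rcons.
  by rewrite subSn // !take_oversize ?size_rcons ?size_drop.
case/andP => qa sba; rewrite IH // !mulmxA /segment drop_rcons // -cats1.
by rewrite takel_cat // size_drop leq_sub2r.
Qed.

End Schedules.

Lemma scheduler_rcons (T : Type) (a : seq T) S x :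
  scheduler a S -> scheduler (rcons a x) S.
Proof.
case/andP => sortS Sa; rewrite /scheduler sortS size_rcons.
by apply: sub_all Sa => s /leqW.
Qed.

Lemma scheduler_rcons_size (T : Type) (a : seq T) S :
  scheduler a S -> scheduler a (rcons S (size a)).
Proof.
case/andP => sortS Sa; rewrite /scheduler all_rcons leqnn Sa.
by move: sortS; rewrite !(sorted_pairwise leq_trans) pairwise_rcons Sa => ->.
Qed.

Section QMMReachability.
Variables (C : numClosedFieldType) (Sigma Gamma : finType) (n1 n2 : nat).
Variables (U1 : Sigma -> 'M[C]_n1) (M1 : Gamma -> 'M[C]_n1) (rho1 : 'M[C]_n1).
Variables (U2 : Sigma -> 'M[C]_n2) (M2 : Gamma -> 'M[C]_n2) (rho2 : 'M[C]_n2).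

Local Notation HU := (fun s => block_mx (hatmx (U1 s)) 0 0 (hatmx (U2 s))).
Local Notation HM := (fun g => block_mx (hatmx (M1 g)) 0 0 (hatmx (M2 g))).
Local Notation pairvec X Y := (col_mx (vecmx X) (vecmx Y)).
Local Notation reach := (reachable HU HM (pairvec rho1 rho2)).
Local Notation state a sb :=
  (pairvec (sandwich (Vrec U1 M1 a 0 sb) rho1) (sandwich (Vrec U2 M2 a 0 sb) rho2)).

Lemma reachable_schedule l v : reach l v ->
  exists a sb, [/\ size sb = l, scheduler a (unzip1 sb) & v = state a sb].
Proof.
elim=> [|{}l {}v s _ [a [sb [<- aS ->]]]|{}l {}v g _ [a [sb [<- aS ->]]]].
- by exists [::], [::]; rewrite /segment /Uword /= !sandwich1.
- exists (rcons a s), sb; split=> //; first exact: scheduler_rcons.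
  have /andP [_ /[!all_map] sba] := aS.
  by rewrite block_hatmx_vecmx !Vrec_rcons_letter // !sandwichM.
- exists a, (rcons sb (size a, g)); split.
  + by rewrite size_rcons.
  + by rewrite /unzip1 map_rcons; apply: scheduler_rcons_size.
  + by rewrite block_hatmx_vecmx !Vrec_rcons_measure !sandwichM.
Qed.

Lemma Uword_reachable w l X Y : reach l (pairvec X Y) ->
  reach l (pairvec (sandwich (Uword U1 w) X) (sandwich (Uword U2 w) Y)).
Proof.
elim/last_ind: w => [|w s IH] RXY; first by rewrite /Uword /= !sandwich1.
by rewrite !Uword_rcons !sandwichM -block_hatmx_vecmx; apply/reachableU/IH.
Qed.

Lemma schedule_reachable a sb p l X Y : reach l (pairvec X Y) ->
  reach (l + size sb)
    (pairvec (sandwich (Vrec U1 M1 a p sb) X) (sandwich (Vrec U2 M2 a p sb) Y)).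
Proof.
elim: sb p l X Y => [|[s g] sb IH] p l X Y RXY /=.
  by rewrite addn0; apply: Uword_reachable.
rewrite addnS -addSn !sandwichM; apply: IH.
by rewrite -block_hatmx_vecmx; apply/reachableM/Uword_reachable.
Qed.

Lemma kequiv_annihilated k :
  kequiv U1 M1 rho1 U2 M2 rho2 k <->
  reachable_annihilated HU HM (pairvec rho1 rho2)
    (adjmx (col_mx (etavec C n1) (- etavec C n2))) k.
Proof.
split=> [eqPr l v /reachable_schedule [a [sb [<- aS ->]]] sbk|etaR a S aS Sk b].
  have sbS : size (unzip2 sb) == size (unzip1 sb) by rewrite !size_map.
  have Sk : (size (unzip1 sb) <= k)%N by rewrite size_map.
  have := eqPr a _ aS Sk (Tuple sbS).
  rewrite /Pr /Vmx /= zip_unzip etavec_vecmx_col /sandwich => ->.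
  by rewrite subrr raddf0.
have sizeSb : size (zip S b) = size S by rewrite size_zip size_tuple minnn.
have := etaR _ _ (schedule_reachable a (zip S b) 0 (reachable0 _ _ _)).
rewrite add0n sizeSb etavec_vecmx_col => /(_ Sk)/rowP/(_ 0).
by rewrite !mxE eqxx mulr1n => /eqP; rewrite subr_eq0 => /eqP.
Qed.

End QMMReachability.

Theorem proposition1 (C : numClosedFieldType) (Sigma Gamma : finType) (n1 n2 : nat)
  (U1 : Sigma -> 'M[C]_n1) (M1 : Gamma -> 'M[C]_n1) (rho1 : 'M[C]_n1)
  (U2 : Sigma -> 'M[C]_n2) (M2 : Gamma -> 'M[C]_n2) (rho2 : 'M[C]_n2)
  (k : nat) :
  (forall s, unitary (U1 s)) -> measurement M1 -> density rho1 ->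
  (forall s, unitary (U2 s)) -> measurement M2 -> density rho2 ->
  (0 < k)%N ->
  kequiv U1 M1 rho1 U2 M2 rho2 k <->
  exists (F : nat -> 'M[C]_(n1 * n1 + n2 * n2))
         (AS : nat -> Sigma -> 'M[C]_(n1 * n1 + n2 * n2))
         (AG : nat -> Gamma -> 'M[C]_(n1 * n1 + n2 * n2)),
    [/\ (* (1) first column of F 0 *)
        (forall j : 'I_(n1 * n1 + n2 * n2), val j = 0%N ->
           col j (F 0%N) = col_mx (vecmx rho1) (vecmx rho2)),
        (* (2) *)
        (forall l, (l <= k)%N ->
           adjmx (col_mx (etavec C n1) (- etavec C n2)) *m F l = 0),
        (* (3) *)
        (forall (s : Sigma) l, (l <= k)%N ->
           block_mx (hatmx (U1 s)) 0 0 (hatmx (U2 s)) *m F l = F l *m AS l s) &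
        (* (4) *)
        (forall (g : Gamma) l, (l < k)%N ->
           block_mx (hatmx (M1 g)) 0 0 (hatmx (M2 g)) *m F l = F l.+1 *m AG l g)].
Proof.
move=> _ _ [_ /trace_eq1_dim_gt0 n1_gt0] _ _ _ _.
have eta_neq0 : adjmx (col_mx (etavec C n1) (- etavec C n2)) != 0.
  by rewrite adjmx_eq0 col_mx_eq0 negb_and etavec_neq0.
have N_gt0 : (0 < n1 * n1 + n2 * n2)%N by rewrite ltn_addr ?muln_gt0 ?n1_gt0.
rewrite kequiv_annihilated; split; first exact: annihilated_certificate.
by case=> F [AS [AG cert]]; exact: certificate_annihilated N_gt0 cert.
Qed.
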